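(* Let $n\ge2$, $\sigma\ge2$, and let $s$ be a random string of length $n$ with characters i.i.d. uniform over an alphabet of size $\sigma$; let $r$ be its number of maximal runs, $X=r-1$, $q=(2-\sigma)/\sigma$, and $\mathcal{K}(s)$ its peeling kernel. Then $\mathcal{K}(s)$ consists of exactly one distinct symbol iff $r$ is odd iff $X$ is even, and consists of exactly two distinct symbols otherwise. Hence \[\Pr\bigl(|\mathrm{alphabet}(\mathcal{K}(s))|=1\bigr)=\tfrac12\bigl(1+q^{n-1}\bigr),\] which equals $1/2$ exactly when $\sigma=2$, and for $\sigma\ge3$ converges to $1/2$ exponentially fast in $n$.
   Context: A maximal run of a string is a maximal block of consecutive equal symbols. Let $\texttt{@},\texttt{\$}$ be two distinct symbols not in the alphabet. For a string $s$ of length $n$ let $\hat s=\texttt{@}\,s\,\texttt{\$}$ (positions $1,\dots,n+2$); $\hat s[i..j)$ is the substring at positions $i,\dots,j-1$. The leading (trailing) run of a non-empty string is its longest prefix (suffix) consisting of one repeated symbol. The Flashback decomposition $\mathcal{F}(s)$ is the sequence of tokens (pairs $(\sigma,p)$) produced as follows, starting from active span $[lo,hi)=[1,n+3)$: if $lo\ge hi$, stop. Let $\ell$ be the leading-run length of $\hat s[lo..hi)$. If $\ell=hi-lo$, append $(\hat s[lo..hi),0)$ and stop. Otherwise let $\hat s[r'..hi)$ be the trailing run of $\hat s[lo..hi)$ and $\sigma=\hat s[lo..lo+\ell)\cdot\hat s[r'..hi)$; if $lo+\ell\ge r'$, append $(\sigma,0)$ and stop; otherwise append $(\sigma,\ell)$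 and repeat with $[lo+\ell,r')$. The peeling kernel $\mathcal{K}(s)$ is the symbol string of the last token of $\mathcal{F}(s)$, and $\mathrm{alphabet}(w)$ is the set of symbols occurring in $w$. *)

From mathcomp Require Import all_boot all_order all_algebra.
Set Implicit Arguments. Unset Strict Implicit. Unset Printing Implicit Defensive.
Import Order.TTheory GRing.Theory Num.Theory.

(* Symbols of the extended alphabet: None = '@', Some None = '$',
   Some (Some c) = the ordinary character c : 'I_sigma. *)
Definition Sym (sigma : nat) := option (option 'I_sigma).

Definition runs (T : eqType) (s : seq T) : nat :=
  match s with
  | [::] => 0
  | x :: t => (count id (pairmap (fun a b => a != b) x t)).+1
  end.

Definition hat (sigma : nat) (s : seq 'I_sigma) : seq (Sym sigma) :=
  None :: rcons (map (fun c => Some (Some c)) s) (Some None).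

Definition lead_run (T : eqType) (w : seq T) : nat :=
  match w with
  | [::] => 0
  | x :: t => (find (fun y => y != x) t).+1
  end.

(* The Flashback peeling on the current active span w = \hat s[lo..hi),
   indices relative to lo; fuel bounds the number of steps. *)
Fixpoint flash_rec (T : eqType) (fuel : nat) (w : seq T) : seq (seq T * nat) :=
  match fuel with
  | 0 => [::]
  | f.+1 =>
    if w is [::] then [::] else
    let l := lead_run w in
    if l == size w then [:: (w, 0)] else
    let r := size w - lead_run (rev w) in
    let sg := take l w ++ drop r w in
    if r <= l then [:: (sg, 0)]
    else (sg, l) :: flash_rec f (take (r - l) (drop l w))
  end.

(* Flashback decomposition F(s) (fuel size+1 is enough: each step shrinks the span) *)
Definition flashback (sigma : nat) (s : seq 'I_sigma) : seq (seq (Sym sigma) * nat) :=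
  flash_rec (size (hat s)).+1 (hat s).

Definition kernel (sigma : nat) (s : seq 'I_sigma) : seq (Sym sigma) :=
  (last ([::], 0) (flashback s)).1.

Definition alph_size (T : eqType) (w : seq T) : nat := size (undup w).

Definition prob_unif (n sigma : nat) (P : n.-tuple 'I_sigma -> bool) : rat :=
  (#|[set s : n.-tuple 'I_sigma | P s]|%:R / #|{: n.-tuple 'I_sigma}|%:R)%R.

Definition P1 (n sigma : nat) : rat :=
  prob_unif (fun s : n.-tuple 'I_sigma => alph_size (kernel s) == 1%N).

From mathcomp Require Import all_boot all_order all_algebra.
From mathcomp Require Import zify ring lra.
Import Order.TTheory GRing.Theory Num.Theory.

(* A peeling step strips the leading and the trailing run of the active span,
   so a span with at least three runs loses exactly two runs; the process ends
   on a single run (one symbol) or on two runs of distinct symbols (two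
   symbols).  As runs(@ s $) = runs(s) + 2, the kernel has one symbol exactly
   when runs(s) is odd.
   For the probability, (-1)^(runs t - 1) is the product over adjacent positions
   of (-1)^[t_i <> t_(i+1)]; summing out the first letter contributes the factor
   sum_x (-1)^[x <> y] = 2 - sigma whatever y is, so the signed count of strings
   of length n is sigma (2 - sigma)^(n-1), and the strings with an odd number of
   runs number (sigma^n + sigma (2 - sigma)^(n-1)) / 2. *)

Section Runs.
Variable T : eqType.
Implicit Types (a b x y : T) (s t u v w : seq T).

Lemma ohead_rcons t x : ohead (rcons t x) = Some (head x t).
Proof. by case: t. Qed.

Lemma ohead_rev_cons x s : ohead (rev (x :: s)) = Some (last x s).
Proof. by elim/last_ind: s => //= s y _; rewrite rev_cons rev_rcons last_rcons. Qed.

Lemma ohead_cat_cons s x t : ohead (s ++ x :: t) = Some (head x s).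
Proof. by case: s. Qed.

Lemma ohead_rev_cat_cons s x t : ohead (rev (s ++ x :: t)) = ohead (rev (x :: t)).
Proof. by rewrite rev_cat rev_cons cat_rcons ohead_cat_cons ohead_rcons. Qed.

Lemma runs_cons x t : runs (x :: t) = (ohead t != Some x) + runs t.
Proof. by case: t => //= y t; rewrite addnS eq_sym. Qed.

Lemma runs_rcons x s y : runs (rcons (x :: s) y) = runs (x :: s) + (last x s != y).
Proof. by rewrite /runs rcons_cons -cats1 /= pairmap_cat count_cat /= addn0 addSn. Qed.

Lemma runs_rev s : runs (rev s) = runs s.
Proof.
elim/last_ind: s => // s x IH; rewrite rev_rcons runs_cons IH.
case: s {IH} => // y s; rewrite runs_rcons ohead_rev_cons addnC.
by congr (_ + _).
Qed.

Lemma runs_nseq_cat a l u : ohead u != Some a -> runs (nseq l.+1 a ++ u) = (runs u).+1.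
Proof.
move=> ua; elim: l => [|l IH]; first by rewrite cat1s runs_cons ua.
by rewrite [nseq l.+2 a ++ u]/= runs_cons IH /= eqxx.
Qed.

Lemma runs_cat_nseq v l b : ohead (rev v) != Some b -> runs (v ++ nseq l.+1 b) = (runs v).+1.
Proof. by move=> vb; rewrite -runs_rev rev_cat rev_nseq runs_nseq_cat // runs_rev. Qed.

Lemma lead_run_nseq_cat a l u : ohead u != Some a -> lead_run (nseq l.+1 a ++ u) = l.+1.
Proof.
move=> ua; rewrite /lead_run /= find_cat has_nseq size_nseq eqxx andbF.
by case: u ua => [|y u] /=; rewrite ?addn0 // => ->; rewrite addn0.
Qed.

Lemma lead_run_decomp w : w != [::] ->
  exists a l u, w = nseq l.+1 a ++ u /\ ohead u != Some a.
Proof.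
elim: w => // x [|y t] IH _; first by exists x, 0, [::].
have [a [l [u [-> ua]]]] := IH isT.
have [->|xa] := eqVneq x a; first by exists a, l.+1, u.
by exists x, 0, (nseq l.+1 a ++ u); split; rewrite //= eq_sym.
Qed.

Lemma trail_run_decomp w : w != [::] ->
  exists b l v, w = v ++ nseq l.+1 b /\ ohead (rev v) != Some b.
Proof.
rewrite -(revK w) -size_eq0 size_rev size_eq0 => /lead_run_decomp [b [l [u [-> ub]]]].
by exists b, l, (rev u); rewrite rev_cat rev_nseq revK.
Qed.

End Runs.

Section Peeling.
Variable T : eqType.
Implicit Types (a b : T) (v w : seq T).

Lemma flash_recE f w : w != [::] ->
  flash_rec f.+1 w =
    if lead_run w == size w then [:: (w, 0)]
    else if size w - lead_run (rev w) <= lead_run w then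
      [:: (take (lead_run w) w ++ drop (size w - lead_run (rev w)) w, 0)]
    else (take (lead_run w) w ++ drop (size w - lead_run (rev w)) w, lead_run w)
         :: flash_rec f (take (size w - lead_run (rev w) - lead_run w) (drop (lead_run w) w)).
Proof. by case: w. Qed.

Lemma flash_rec_nseq f a l : flash_rec f.+1 (nseq l.+1 a) = [:: (nseq l.+1 a, 0)].
Proof.
by rewrite flash_recE // -[nseq _ _]cats0 lead_run_nseq_cat // size_cat size_nseq /= addn0 eqxx.
Qed.

Lemma flash_rec_two_runs f a b l l' v :
    ohead (v ++ nseq l'.+1 b) != Some a -> ohead (rev (nseq l.+1 a ++ v)) != Some b ->
  flash_rec f.+1 (nseq l.+1 a ++ v ++ nseq l'.+1 b) =
    if v is [::] then [:: (nseq l.+1 a ++ nseq l'.+1 b, 0)]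
    else (nseq l.+1 a ++ nseq l'.+1 b, l.+1) :: flash_rec f v.
Proof.
move=> ha hb; set w := nseq l.+1 a ++ _.
have lead_w : lead_run w = l.+1 by rewrite lead_run_nseq_cat.
have trail_w : lead_run (rev w) = l'.+1.
  by rewrite /w catA rev_cat rev_nseq lead_run_nseq_cat.
have size_w : size w = l.+1 + size v + l'.+1 by rewrite !size_cat !size_nseq addnA.
have take_w : take l.+1 w = nseq l.+1 a by rewrite take_size_cat ?size_nseq.
have drop_w : drop (l.+1 + size v) w = nseq l'.+1 b.
  by rewrite /w catA drop_size_cat // size_cat size_nseq.
have mid_w : take (size v) (drop l.+1 w) = v.
  by rewrite /w drop_size_cat ?size_nseq // take_size_cat.
rewrite flash_recE // lead_w trail_w size_w addnK addKn take_w drop_w mid_w.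
have -> : (l.+1 == l.+1 + size v + l'.+1) = false by lia.
have -> : (l.+1 + size v <= l.+1) = (v == [::]) by rewrite -size_eq0; lia.
by case: v {ha hb w lead_w trail_w size_w take_w drop_w mid_w}.
Qed.

Lemma alph_sizeE w s : uniq s -> w =i s -> alph_size w = size s.
Proof.
move=> s_uniq ws; apply/perm_size/uniq_perm; rewrite ?undup_uniq // => x.
by rewrite mem_undup.
Qed.

Lemma alph_size_nseq a l : alph_size (nseq l.+1 a) = 1.
Proof. by rewrite (@alph_sizeE _ [:: a]) // => x; rewrite mem_nseq inE. Qed.

Lemma alph_size_nseq2 a b l l' : a != b -> alph_size (nseq l.+1 a ++ nseq l'.+1 b) = 2.
Proof.
move=> ab; rewrite (@alph_sizeE _ [:: a; b]) ?/= ?inE ?ab // => x.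
by rewrite -cat_cons mem_cat !(mem_nseq _.+1) !inE.
Qed.

Lemma alph_size_last_flash_rec f w d : w != [::] -> size w < f ->
  alph_size (last d (flash_rec f w)).1 = if odd (runs w) then 1 else 2.
Proof.
elim: f w d => // f IH w d /lead_run_decomp [a [l [u [-> ua]]]].
have [-> _ | /trail_run_decomp [b [l' [v [Eu vb]]]]] := eqVneq u [::].
  by rewrite cats0 flash_rec_nseq -[nseq _ _]cats0 runs_nseq_cat // cats0 alph_size_nseq.
move: ua; rewrite {u}Eu => ua; rewrite runs_nseq_cat // runs_cat_nseq //.
case: v vb ua => [|c v] vb ua size_w.
  have ab : a != b by rewrite eq_sym.
  rewrite (flash_rec_two_runs _ _ _ _ _ [::]) ?cats0 ?rev_nseq 1?eq_sym //.
  exact: alph_size_nseq2.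
rewrite flash_rec_two_runs ?ohead_rev_cat_cons // last_cons !oddS negbK.
by apply: IH => //; move: size_w; rewrite !size_cat /=; lia.
Qed.

End Peeling.

Lemma runs_map (T U : eqType) (g : T -> U) s : injective g -> runs (map g s) = runs s.
Proof.
move=> g_inj; case: s => // x t /=; congr S.
by elim: t x => //= y t IH x; rewrite IH inj_eq.
Qed.

Lemma runs_hat sigma (s : seq 'I_sigma) : runs (hat s) = (runs s).+2.
Proof.
rewrite /hat -cats1 -[None :: _]/(nseq 1 None ++ _) runs_nseq_cat; last by case: s.
rewrite -[[:: Some None]]/(nseq 1 _) runs_cat_nseq ?runs_map // => [x y [] //|].
by case/lastP: s => // s x; rewrite map_rcons rev_rcons.
Qed.

Lemma alph_size_kernel sigma (s : seq 'I_sigma) :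
  alph_size (kernel s) = if odd (runs s) then 1 else 2.
Proof. by rewrite /kernel /flashback alph_size_last_flash_rec // runs_hat !oddS negbK. Qed.

Section SignedCount.
Local Open Scope ring_scope.
Variables (R : pzRingType) (T : finType).

Lemma big_tuple_cons n (F : n.+1.-tuple T -> R) :
  \sum_(t : n.+1.-tuple T) F t = \sum_(x : T) \sum_(u : n.-tuple T) F [tuple of x :: u].
Proof.
rewrite pair_big /= (reindex (fun p : T * n.-tuple T => [tuple of p.1 :: p.2])) //=.
exists (fun t => (thead t, [tuple of behead t])) => [[x u] _ | t _].
  by congr pair; apply: val_inj.
by rewrite [RHS]tuple_eta.
Qed.

Lemma sum_sign_neq (y : T) : \sum_(x : T) (-1) ^+ (x != y) = 2 - #|T|%:R :> R.
Proof.
rewrite (bigD1 y) //= eqxx (eq_bigr (fun=> -1)) => [|x /negPf -> //].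
rewrite sumr_const -[in RHS](cardC (pred1 y)) card1 natrD expr0 mulNrn.
by rewrite (@eq_card _ _ [predC pred1 y]) // opprD addrA -[2]/(1 + 1) addrK.
Qed.

Lemma sign_runs_cons n x (u : n.+1.-tuple T) :
  (-1) ^+ (runs (x :: u)).-1 = (-1) ^+ (x != thead u) * (-1) ^+ (runs u).-1 :> R.
Proof.
by case: u => [[|y u] //= su]; rewrite exprD.
Qed.

Lemma sum_sign_runs n :
  \sum_(t : n.+1.-tuple T) (-1) ^+ (runs t).-1 = #|T|%:R * (2 - #|T|%:R) ^+ n :> R.
Proof.
elim: n => [|n IH].
  rewrite (eq_bigr (fun=> 1)) => [|[[|x []]] //].
  by rewrite sumr_const card_tuple expn1 mulr1.
rewrite big_tuple_cons exchange_big.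
under eq_bigr do rewrite (eq_bigr _ (fun x _ => sign_runs_cons _ x _)) -mulr_suml sum_sign_neq.
by rewrite -mulr_sumr IH !mulr_natl exprS mulrnAr.
Qed.

Lemma card_odd_runs n :
  #|[set t : n.+1.-tuple T | odd (runs t)]|%:R *+ 2
    = (#|T| ^ n.+1)%:R + #|T|%:R * (2 - #|T|%:R) ^+ n :> R.
Proof.
have sign_odd (t : n.+1.-tuple T) : (-1) ^+ (runs t).-1 = (odd (runs t))%:R *+ 2 - 1 :> R.
  case: t => [[|x t] //= _]; rewrite -signr_odd.
  by case: (odd _); rewrite /= ?expr0 ?expr1 ?mul0rn ?sub0r // -[1 *+ 2]/(1 + 1) addrK.
rewrite -sum_sign_runs (eq_bigr _ (fun t _ => sign_odd t)) sumrB sumr_const card_tuple.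
rewrite sumrMnl addrC subrK -natr_sum -sum1dep_card big_mkcond.
by congr (_%:R *+ 2); apply: eq_bigr => t _; case: (odd _).
Qed.

End SignedCount.

Local Open Scope ring_scope.

Lemma P1_succ n sigma : (0 < sigma)%N ->
  P1 n.+1 sigma = 1 / 2 * (1 + ((2 - sigma%:R) / sigma%:R) ^+ n).
Proof.
move=> sigma_gt0; rewrite /P1 /prob_unif card_tuple card_ord natrX.
have -> : [set s : n.+1.-tuple 'I_sigma | alph_size (kernel s) == 1%N]
        = [set s : n.+1.-tuple _ | odd (runs s)].
  by apply/setP => s; rewrite !inE alph_size_kernel; case: odd.
have := card_odd_runs rat 'I_sigma n; rewrite card_ord natrX -mulr_natr => card_odd.
rewrite -[_%:R](mulfK (_ : 2 != 0)) // card_odd expr_div_n exprS.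
have sigma_neq0 : sigma%:R != 0 :> rat by rewrite pnatr_eq0 -lt0n.
field; by rewrite sigma_neq0 expf_neq0.
Qed.

Lemma P1_sub_half n sigma : (0 < sigma)%N ->
  P1 n.+1 sigma - 1 / 2 = 1 / 2 * ((2 - sigma%:R) / sigma%:R) ^+ n.
Proof. by move=> sigma_gt0; rewrite P1_succ //; lra. Qed.

Lemma P1_eq_half n sigma : (0 < sigma)%N -> (P1 n.+2 sigma == 1 / 2) = (sigma == 2)%N.
Proof.
move=> sigma_gt0; have sigma_neq0 : sigma%:R != 0 :> rat by rewrite pnatr_eq0 -lt0n.
rewrite -subr_eq0 P1_sub_half // mulf_eq0 orFb expf_eq0 /=.
by rewrite mulf_eq0 invr_eq0 (negPf sigma_neq0) orbF subr_eq0 eq_sym (eqr_nat rat sigma 2).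
Qed.

Lemma normr_P1_sub_half n sigma : (2 <= sigma)%N ->
  `|P1 n.+1 sigma - 1 / 2| = 1 / 2 * ((sigma%:R - 2) / sigma%:R) ^+ n.
Proof.
move=> sigma_ge2; have sigma_ge2R : 2 <= sigma%:R :> rat by rewrite (ler_nat rat 2).
rewrite P1_sub_half ?(leq_trans _ sigma_ge2) //.
have -> : (2 - sigma%:R) / sigma%:R = - ((sigma%:R - 2) / sigma%:R) :> rat.
  by rewrite -mulNr opprB.
by rewrite normrM normrX normrN !ger0_norm ?divr_ge0 //; lra.
Qed.

Theorem corollaryA2 (sigma : nat) : (2 <= sigma)%N ->
  (forall (n : nat) (s : n.-tuple 'I_sigma), (2 <= n)%N ->
     (alph_size (kernel s) == 1%N = odd (runs s)) /\
     (odd (runs s) = ~~ odd (runs s).-1) /\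
     (~~ odd (runs s) -> alph_size (kernel s) = 2%N)) /\
  (forall n : nat, (2 <= n)%N ->
     P1 n sigma = (1 / 2 * (1 + ((2 - sigma%:R) / sigma%:R) ^+ n.-1))%R) /\
  (forall n : nat, (2 <= n)%N -> (P1 n sigma = 1 / 2)%R <-> sigma = 2%N) /\
  ((3 <= sigma)%N -> exists (C rho : rat), (0 < C)%R /\ (0 <= rho)%R /\ (rho < 1)%R /\
     forall n : nat, (2 <= n)%N -> (`|P1 n sigma - 1 / 2| <= C * rho ^+ n)%R).
Proof.
move=> sigma_ge2; have sigma_gt0 : (0 < sigma)%N by apply: ltnW.
split.
  move=> n s n_ge2; rewrite alph_size_kernel.
  have : (0 < runs s)%N by case: s => [[|x t]] //=; rewrite eq_sym; case: n n_ge2.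
  by case: (runs s) => // r _; rewrite oddS; case: (odd r).
split; first by case=> // n _; rewrite P1_succ.
split; first by case=> [|[|n]] // _; rewrite (rwP eqP) P1_eq_half // (rwP eqP).
move=> sigma_ge3; set rho : rat := (sigma%:R - 2) / sigma%:R.
have sigma_ge3R : 3 <= sigma%:R :> rat by rewrite (ler_nat rat 3).
have rho_gt0 : 0 < rho by rewrite divr_gt0 //; lra.
have rho_lt1 : rho < 1 by rewrite ltr_pdivrMr; lra.
exists (1 / 2 / rho), rho; split; first by rewrite divr_gt0.
split; first exact: ltW.
split=> // -[|n] // _.
by rewrite normr_P1_sub_half // exprS mulrA divfK ?gt_eqF.
Qed.
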